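(* Let $L$ be a solvable finite-dimensional Lie algebra over a field $F$ of characteristic $p$, such that $L^2$ is nilpotent of class less than $p$, and let $A/B$ be a complemented chief factor of $L$. Then the map which assigns to each conjugacy class $\{\exp(\mathrm{ad}\,a)(M) : a \in L\}$ of complements of $A/B$ in $L$ the common core $M_L$ of its elements induces a bijection between the set of all conjugacy classes of complements of $A/B$ in $L$ and the set of all ideals $N$ of $L$ which complement $A/B$ in $C_L(A/B)$ (i.e. $C_L(A/B) = A + N$ and $A \cap N = B$). Consequently there is a bijection between the set of precrowns of $L$ associated with $A/B$ and the set of conjugacy classes of complements of $A/B$ in $L$.
   Context: A chief factor of $L$ is $A/B$ with $B\subsetneq A$ ideals and no ideal strictly between; $C_L(A/B) = \{x : [x,A]\subseteq B\}$. A subalgebra $M$ supplements $A/B$ if $L = A+M$ and $B \subseteq A\cap M$, and complements it if moreover $A \cap M = B$. The core $M_L$ is the largest ideal of $L$ in $M$; $L$ is primitive if some maximal subalgebra has zero core; $L$ is monolithic if it has a unique minimal ideal. Two complements $M,S$ are conjugate if $S = \exp(\mathrm{ad}\,a)(M)$ for some $a\in L$ (for which $\exp(\mathrm{ad}\,a)$ is a defined automorphism). For a supplemented chief factor $A/B$ and a maximal subalgebra $M$ supplementing $A/B$ with $L/M_L$ monolithic and primitive, the chief factor $\mathrm{Soc}(L/M_L) = (A+M_L)/M_L$ is called the precrown of $L$ associated with $M$ and $A/B$; these are the precrowns associated with $A/B$. *)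

(* Finite-dimensional Lie algebras over a field F are modelled
   as a finite-dimensional F-vector space V (a vectType) with a bracket
   br : V -> V -> V satisfying the Lie axioms; subspaces are {vspace V}. *)
From HB Require Import structures.
From mathcomp Require Import all_boot all_order all_algebra.
Set Implicit Arguments.
Unset Strict Implicit.
Unset Printing Implicit Defensive.
Import GRing.Theory.
Local Open Scope ring_scope.

Section Lie.
Variables (F : fieldType) (V : vectType F) (br : V -> V -> V).

Definition is_lie : Prop :=
  [/\ (forall x a u v, br x (a *: u + v) = a *: br x u + br x v),
      (forall y a u v, br (a *: u + v) y = a *: br u y + br v y),
      (forall x, br x x = 0) &
      (forall x y z, br x (br y z) + br y (br z x) + br z (br x y) = 0)].

(* characteristic of F is p (p = 0 meaning characteristic zero) *)
Definition has_char (p : nat) : Prop :=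
  if p == 0%N then [pchar F] =i pred0 else p \in [pchar F].

Definition brs (A B : {vspace V}) : {vspace V} :=
  <<[seq br x y | x <- vbasis A, y <- vbasis B]>>%VS.

Fixpoint dser (N : {vspace V}) (k : nat) : {vspace V} :=
  if k is k'.+1 then brs (dser N k') (dser N k') else N.

Definition solvable_lie : Prop := exists k, dser fullv k = 0%VS.

(* lower central series: lcs N k = N^(k+1), i.e. N^1 = N, N^(k+1) = [N^k, N] *)
Fixpoint lcs (N : {vspace V}) (k : nat) : {vspace V} :=
  if k is k'.+1 then brs (lcs N k') N else N.

(* N is nilpotent of class < p (for p = 0: N is nilpotent, no bound) *)
Definition nilp_class_lt (N : {vspace V}) (p : nat) : Prop :=
  if p == 0%N then exists k, lcs N k = 0%VS else lcs N p.-1 = 0%VS.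

Definition subalg (M : {vspace V}) : Prop :=
  forall x y, x \in M -> y \in M -> br x y \in M.

Definition ideal (I : {vspace V}) : Prop :=
  forall x y, y \in I -> br x y \in I.

Definition chief_factor (A B : {vspace V}) : Prop :=
  [/\ ideal A, ideal B, (B <= A)%VS, A != B &
      forall C, ideal C -> (B <= C)%VS -> (C <= A)%VS -> C = B \/ C = A].

Definition supplements (A B M : {vspace V}) : Prop :=
  [/\ subalg M, (A + M)%VS = fullv & (B <= A :&: M)%VS].

Definition complements (A B M : {vspace V}) : Prop :=
  [/\ subalg M, (A + M)%VS = fullv & (A :&: M)%VS = B].

Definition is_core (M K : {vspace V}) : Prop :=
  [/\ ideal K, (K <= M)%VS & forall I, ideal I -> (I <= M)%VS -> (I <= K)%VS].

Definition centB (A B : {vspace V}) (x : V) : Prop :=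
  forall y, y \in A -> br x y \in B.

Definition complements_in_cent (A B N : {vspace V}) : Prop :=
  (forall x, x \in (A + N)%VS <-> centB A B x) /\ (A :&: N)%VS = B.

Definition maximal_subalg (M : {vspace V}) : Prop :=
  [/\ subalg M, M != fullv &
      forall S, subalg S -> (M <= S)%VS -> S = M \/ S = fullv].

(* exp(ad a): the truncated series sum_{i<n} (ad a)^i / i!, which is defined
   when (ad a)^n = 0 and 0!,...,(n-1)! are invertible in F. *)
Definition expad (a : V) (n : nat) (x : V) : V :=
  \sum_(i < n) ((i`!)%:R)^-1 *: iter i (br a) x.

Definition expad_defined (a : V) (n : nat) : Prop :=
  (forall x, iter n (br a) x = 0) /\ (forall i, (i < n)%N -> (i`!)%:R != 0 :> F).

Definition is_lie_aut (f : V -> V) : Prop :=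
  [/\ (forall a u v, f (a *: u + v) = a *: f u + f v), bijective f &
      forall x y, f (br x y) = br (f x) (f y)].

Definition vimage (f : V -> V) (M : {vspace V}) : {vspace V} :=
  <<[seq f x | x <- vbasis M]>>%VS.

Definition conj_cls (M : {vspace V}) : {vspace V} -> Prop :=
  fun S => exists a n, [/\ expad_defined a n, is_lie_aut (expad a n) &
                          S = vimage (expad a n) M].

Definition is_compl_class (A B : {vspace V}) (X : {vspace V} -> Prop) : Prop :=
  exists M, complements A B M /\ X = conj_cls M.

(* Quotients L/K are described through the correspondence with ideals and
   subalgebras of L containing K. I is a minimal ideal of L/K, i.e. I/K. *)
Definition min_ideal_over (K I : {vspace V}) : Prop :=
  [/\ ideal I, (K <= I)%VS, I != K &
      forall J, ideal J -> (K <= J)%VS -> (J <= I)%VS -> J = K \/ J = I].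

Definition monolithic_quo (K : {vspace V}) : Prop :=
  exists I, min_ideal_over K I /\ forall J, min_ideal_over K J -> J = I.

(* L/K is primitive: some maximal subalgebra S/K of L/K has zero core *)
Definition primitive_quo (K : {vspace V}) : Prop :=
  exists S, [/\ maximal_subalg S, (K <= S)%VS & is_core S K].

(* P = (A + M_L, M_L) represents the precrown (A + M_L)/M_L associated
   with M and A/B *)
Definition is_precrown (A B : {vspace V}) (P : {vspace V} * {vspace V}) : Prop :=
  exists M K, [/\ maximal_subalg M, supplements A B M, is_core M K,
                 monolithic_quo K /\ primitive_quo K & P = ((A + K)%VS, K)].

End Lie.

(* The derived algebra L^2 is nilpotent, so it centralizes every chief factor
   A/B; hence A/B is abelian and, for a complement M, the core M_L is
   C_L(A/B) :&: M and complements A/B in C_L(A/B) = A + M_L. If some m0 in M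
   acts nontrivially on A/B, then ad m0 induces a bijection of the irreducible
   L-module A/B (its image and kernel are ideals between B and A). This gives
   the converse: an ideal N complementing A/B in C_L(A/B) is the core of the
   complement {y | [m0, y] in N}. It also gives conjugacy: two complements
   M1, M2 with the same core are conjugate under exp(ad l) for some l in
   A :&: L^2, chosen so that exp(ad l) m0 lands in M2 modulo B; exp(ad l) is
   an automorphism because L^2 has class < p. Finally a maximal subalgebra
   supplementing A/B complements it, and L/M_L is then monolithic and
   primitive with socle (A + M_L)/M_L, which matches precrowns with classes.
   The solvability hypothesis is implied by the nilpotence of L^2 and unused. *)

From HB Require Import structures.
From mathcomp Require Import all_boot all_order all_algebra zify.
From Stdlib Require Import Classical FunctionalExtensionality PropExtensionality.
Set Implicit Arguments. Unset Strict Implicit. Unset Printing Implicit Defensive.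
Import GRing.Theory.
Local Open Scope ring_scope.

Lemma linfunE_lin (F : fieldType) (V : vectType F) (f : V -> V) :
  (forall a u v, f (a *: u + v) = a *: f u + f v) -> linfun f =1 f.
Proof.
move=> fL; pose g : {linear V -> V} := HB.pack f (GRing.isLinear.Build F V V *:%R f fL).
exact: (lfunE g).
Qed.

Lemma vbasis_span (F : fieldType) (V : vectType F) (U : {vspace V}) :
  <<vbasis U>>%VS = U.
Proof. exact: span_basis (vbasisP U). Qed.

Section LieAlgebra.
Variables (F : fieldType) (V : vectType F) (br : V -> V -> V).
Hypothesis lie : is_lie br.
Implicit Types (A B I J K M S W X Y : {vspace V}).

Lemma br_linr x a u v : br x (a *: u + v) = a *: br x u + br x v.
Proof. by case: lie. Qed.
Lemma br_linl y a u v : br (a *: u + v) y = a *: br u y + br v y.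
Proof. by case: lie. Qed.
Lemma brxx x : br x x = 0. Proof. by case: lie. Qed.

Lemma brDr x u v : br x (u + v) = br x u + br x v.
Proof. by have := br_linr x 1 u v; rewrite !scale1r. Qed.
Lemma brDl y u v : br (u + v) y = br u y + br v y.
Proof. by have := br_linl y 1 u v; rewrite !scale1r. Qed.
Lemma br0r x : br x 0 = 0.
Proof. by apply: (@addrI _ (br x 0)); rewrite -brDr !addr0. Qed.
Lemma br0l x : br 0 x = 0.
Proof. by apply: (@addrI _ (br 0 x)); rewrite -brDl !addr0. Qed.
Lemma brZr x a u : br x (a *: u) = a *: br x u.
Proof. by rewrite -[a *: u]addr0 br_linr br0r addr0. Qed.
Lemma brZl x a u : br (a *: u) x = a *: br u x.
Proof. by rewrite -[a *: u]addr0 br_linl br0l addr0. Qed.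
Lemma brNr x u : br x (- u) = - br x u.
Proof. by rewrite -scaleN1r brZr scaleN1r. Qed.
Lemma brNl x u : br (- u) x = - br u x.
Proof. by rewrite -scaleN1r brZl scaleN1r. Qed.
Lemma brBr x u v : br x (u - v) = br x u - br x v.
Proof. by rewrite brDr brNr. Qed.
Lemma brBl x u v : br (u - v) x = br u x - br v x.
Proof. by rewrite brDl brNl. Qed.

Lemma br_anti x y : br x y = - br y x.
Proof.
have := brxx (x + y); rewrite brDl !brDr !brxx add0r addr0.
by move/eqP; rewrite addr_eq0 => /eqP.
Qed.

Lemma br_jacobi x y z : br x (br y z) = br (br x y) z + br y (br x z).
Proof.
case: lie => _ _ _ /(_ x y z); rewrite (br_anti z (br x y)) (br_anti z x) brNr.
move=> H; rewrite -[LHS]subr0 -H.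
by rewrite !opprD !opprK !addrA subrr add0r addrC.
Qed.

Definition adl x : 'End(V) := linfun (br x).
Definition adr y : 'End(V) := linfun (br^~ y).
Lemma adlE x u : adl x u = br x u.
Proof. exact: (linfunE_lin (br_linr x)). Qed.
Lemma adrE y u : adr y u = br u y.
Proof. exact: (linfunE_lin (br_linl y)). Qed.

Lemma memv_brs X Y x y : x \in X -> y \in Y -> br x y \in brs br X Y.
Proof.
move=> Xx Yy.
have sXpre y' : y' \in vbasis Y -> (X <= adr y' @^-1: brs br X Y)%VS.
  move=> Yy'; rewrite -{1}(vbasis_span X); apply/span_subvP => x' Xx'.
  by rewrite -memv_preim adrE; apply: memv_span; apply/allpairsP; exists (x', y').
have : (Y <= adl x @^-1: brs br X Y)%VS.
  rewrite -{1}(vbasis_span Y); apply/span_subvP => y' Yy'.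
  by rewrite -memv_preim adlE -adrE memv_preim (subvP (sXpre y' Yy')).
by move/subvP/(_ y Yy); rewrite -memv_preim adlE.
Qed.

Lemma brs_subv X Y W :
  (forall x y, x \in X -> y \in Y -> br x y \in W) -> (brs br X Y <= W)%VS.
Proof.
move=> sXYW; apply/span_subvP => z /allpairsP [[x y] /= [Xx Yy ->]].
by apply: sXYW; apply: vbasis_mem.
Qed.

Lemma brsS X Y X' Y' :
  (X <= X')%VS -> (Y <= Y')%VS -> (brs br X Y <= brs br X' Y')%VS.
Proof.
move=> /subvP sX /subvP sY; apply: brs_subv => x y Xx Yy.
by apply: memv_brs; [apply: sX | apply: sY].
Qed.

Lemma ideal0 : ideal br 0%VS.
Proof. by move=> x y; rewrite memv0 => /eqP ->; rewrite br0r memv0. Qed.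

Lemma ideal_fullv : ideal br fullv.
Proof. by move=> x y _; apply: memvf. Qed.

Lemma idealD X Y : ideal br X -> ideal br Y -> ideal br (X + Y).
Proof.
move=> iX iY w z /memv_addP [x Xx [y Yy ->]].
by rewrite brDr; apply: memv_add; [apply: iX | apply: iY].
Qed.

Lemma idealI X Y : ideal br X -> ideal br Y -> ideal br (X :&: Y).
Proof.
move=> iX iY w z /memv_capP [Xz Yz].
by apply/memv_capP; split; [apply: iX | apply: iY].
Qed.

Lemma ideal_brs X Y : ideal br X -> ideal br Y -> ideal br (brs br X Y).
Proof.
move=> iX iY w z XYz.
have : (brs br X Y <= adl w @^-1: brs br X Y)%VS.
  apply: brs_subv => x y Xx Yy; rewrite -memv_preim adlE br_jacobi.
  by apply: memvD; apply: memv_brs => //; [apply: iX | apply: iY].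
by move/subvP/(_ z XYz); rewrite -memv_preim adlE.
Qed.

Lemma ideal_brl X x y : ideal br X -> x \in X -> br x y \in X.
Proof. by move=> iX Xx; rewrite br_anti memvN; apply: iX. Qed.

Lemma ideal_subalg X : ideal br X -> subalg br X.
Proof. by move=> iX x y _; apply: iX. Qed.

Lemma ideal_addv_stable A M X : (A + M)%VS = fullv ->
  (forall a y, a \in A -> y \in X -> br a y \in X) ->
  (forall m y, m \in M -> y \in X -> br m y \in X) -> ideal br X.
Proof.
move=> AM sA sM w y Xy.
have : w \in (A + M)%VS by rewrite AM memvf.
by case/memv_addP => a Aa [m Mm ->]; rewrite brDl; apply: memvD; [apply: sA | apply: sM].
Qed.

Lemma chief_minimal A B J : chief_factor br A B -> ideal br J ->
  (B <= J)%VS -> (J <= A)%VS -> J = B \/ J = A.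
Proof. by case=> _ _ _ _ minAB; apply: minAB. Qed.

Lemma chief_nsub A B : chief_factor br A B -> ~ (A <= B)%VS.
Proof.
case=> _ _ sBA /negP nAB _ sAB; apply: nAB.
by rewrite eqEsubv sAB sBA.
Qed.

Lemma core_exists M : exists K, is_core br M K.
Proof.
suff grow n I : ideal br I -> (I <= M)%VS -> (\dim (fullv : {vspace V}) - \dim I < n)%N ->
    exists K, is_core br M K.
  exact: (grow _ 0%VS ideal0 (sub0v M) (ltnSn _)).
elim: n I => // n IHn I iI sIM hdim.
have [[J [iJ sJM nJI]]|noJ] := classic
  (exists J, [/\ ideal br J, (J <= M)%VS & ~~ (J <= I)%VS]); last first.
  exists I; split => // J iJ sJM; apply: NNPP => nJI.
  by apply: noJ; exists J; split => //; apply/negP.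
apply: (IHn (I + J)%VS); [exact: idealD | by rewrite subv_add sIM | ].
have ltIJ : (\dim I < \dim (I + J))%N.
  rewrite ltnNge; apply: contra nJI => leIJ.
  have /eqP -> : I == (I + J)%VS by rewrite eqEdim addvSl.
  exact: addvSr.
have := dimvS (subvf (I + J)); lia.
Qed.

Lemma core_unique M K K' : is_core br M K -> is_core br M K' -> K = K'.
Proof.
case=> iK sKM maxK [iK' sK'M maxK']; apply/eqP.
by rewrite eqEsubv (maxK' _ iK sKM) (maxK _ iK' sK'M).
Qed.

Definition centv A B : {vspace V} :=
  (\bigcap_(i < \dim A) (adr (tnth (vbasis A) i) @^-1: B))%VS.

Lemma memv_centv A B x : x \in centv A B <-> centB br A B x.
Proof.
split=> [Cx y Ay|Cx].
  have : (A <= adl x @^-1: B)%VS.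
    rewrite -{1}(vbasis_span A); apply/span_subvP => y' /tnthP [i ->].
    rewrite -memv_preim adlE -adrE memv_preim.
    by move: Cx; rewrite memvE => /subv_bigcapP /(_ i isT); rewrite -memvE.
  by move/subvP/(_ y Ay); rewrite -memv_preim adlE.
rewrite memvE; apply/subv_bigcapP => i _; rewrite -memvE.
by rewrite -memv_preim adrE; apply/Cx/vbasis_mem/mem_tnth.
Qed.

Lemma ideal_centv A B : ideal br A -> ideal br B -> ideal br (centv A B).
Proof.
move=> iA iB w z /memv_centv Cz; apply/memv_centv => y Ay.
have -> : br (br w z) y = br w (br z y) - br z (br w y) by rewrite br_jacobi addrK.
by apply: memvB; [apply/iB/Cz | apply/Cz/iA].
Qed.

Local Notation L2 := (brs br fullv fullv).

Lemma memv_L2 x y : br x y \in L2.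
Proof. by apply: memv_brs; apply: memvf. Qed.

Lemma lcs_succ_sub k : (lcs br L2 k.+1 <= lcs br L2 k)%VS.
Proof.
elim: k => [|k IHk] /=; first by apply: brs_subv => x y _ _; apply: memv_L2.
exact: brsS IHk (subvv _).
Qed.

Lemma lcs_antimono i k : (i <= k)%N -> (lcs br L2 k <= lcs br L2 i)%VS.
Proof.
move=> /subnK <-; elim: (k - i)%N => [|d IHd]; first by rewrite add0n subvv.
by rewrite addSn; apply: subv_trans (lcs_succ_sub _) IHd.
Qed.

Lemma lcs_br j i x y : x \in lcs br L2 i -> y \in lcs br L2 j ->
  br x y \in lcs br L2 (i + j).+1.
Proof.
elim: j i x y => [|j IHj] i x y Xx Yy; first by rewrite addn0 /=; apply: memv_brs.
have : (lcs br L2 j.+1 <= adl x @^-1: lcs br L2 (i + j.+1).+1)%VS.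
  apply: brs_subv => u v Uu Vv; rewrite -memv_preim adlE br_jacobi.
  apply: memvD; first by rewrite addnS /=; apply: memv_brs => //; apply: IHj.
  rewrite br_anti memvN; have := IHj i.+1 (br x v) u.
  by rewrite addSn addnS; apply => //; apply: memv_brs.
by move/subvP/(_ y Yy); rewrite -memv_preim adlE.
Qed.

Lemma nilp_class_lt_nilpotent p :
  nilp_class_lt br L2 p -> exists k, lcs br L2 k = 0%VS.
Proof. by rewrite /nilp_class_lt; case: (p == 0%N) => // ?; exists p.-1. Qed.

Section ChiefFactor.
Variables A B : {vspace V}.
Hypotheses (chiefAB : chief_factor br A B) (nilL2 : exists k, lcs br L2 k = 0%VS).

Let iA : ideal br A. Proof. by case: chiefAB. Qed.
Let iB : ideal br B. Proof. by case: chiefAB. Qed.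
Let sBA : (B <= A)%VS. Proof. by case: chiefAB. Qed.

(* If the ideal [L^2, A] + B were A, induction would give A <= lcs L^2 j + B
   for every j, against the nilpotency of L^2. *)
Lemma L2_centralizes_chief x y : x \in L2 -> y \in A -> br x y \in B.
Proof.
have [k L2k0] := nilL2.
have iL2 : ideal br L2 by apply: ideal_brs; apply: ideal_fullv.
have sJA : (brs br L2 A + B <= A)%VS.
  by rewrite subv_add sBA andbT; apply: brs_subv => ? y' _ Ay'; apply: iA.
have [JB|JA] := chief_minimal chiefAB (idealD (ideal_brs iL2 iA) iB) (addvSr _ _) sJA.
  by move=> L2x Ay; rewrite -JB (subvP (addvSl _ _)) ?memv_brs.
exfalso; apply: (chief_nsub chiefAB).
suff sAlcs j : (A <= lcs br L2 j + B)%VS by move: (sAlcs k); rewrite L2k0 add0v.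
elim: j => [|j IHj] /=; rewrite -{1}JA.
  by apply: addvS (subvv B); apply: brs_subv => ? ? _ _; apply: memv_L2.
rewrite subv_add addvSr andbT; apply: brs_subv => x' y' L2x' Ay'.
have /memv_addP [l Ll [b Bb ->]] := subvP IHj _ Ay'.
rewrite brDr; apply: memv_add; last exact: iB.
by rewrite br_anti memvN; apply: memv_brs.
Qed.

(* The ideal (A :&: L^2) + B is B or A; in the second case [A, A] <= [L^2, A] + B. *)
Lemma chief_abelian x y : x \in A -> y \in A -> br x y \in B.
Proof.
have iJ : ideal br ((A :&: L2) + B).
  by apply: idealD iB; apply: idealI iA (ideal_brs ideal_fullv ideal_fullv).
have sJA : ((A :&: L2) + B <= A)%VS by rewrite subv_add capvSl sBA.
move=> Ax Ay; have [JB|JA] := chief_minimal chiefAB iJ (addvSr _ _) sJA.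
  by rewrite -JB (subvP (addvSl _ _)) // memv_cap memv_L2 ideal_brl.
move: Ax; rewrite -JA => /memv_addP [l /memv_capP [_ L2l] [b Bb ->]].
by rewrite brDl; apply: memvD; [apply: L2_centralizes_chief | apply: ideal_brl].
Qed.

Lemma chief_central_or_acting M : (A + M)%VS = fullv ->
  (forall z y, y \in A -> br z y \in B) \/
  exists m0 y0, [/\ m0 \in M, y0 \in A & br m0 y0 \notin B].
Proof.
move=> AM; have [[m0 [y0 [Mm0 Ay0 nB]]]|noact] := classic
  (exists m0 y0, [/\ m0 \in M, y0 \in A & br m0 y0 \notin B]); [by right; exists m0, y0|left].
move=> z y Ay; have : z \in (A + M)%VS by rewrite AM memvf.
case/memv_addP => a Aa [m Mm ->]; rewrite brDl; apply: memvD; first exact: chief_abelian.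
by apply: NNPP => /negP nB; apply: noact; exists m, y.
Qed.

(* The ideal [L, A] + B is not B, hence it is A. *)
Lemma acting_chief_sub_L2 m0 y0 : y0 \in A -> br m0 y0 \notin B -> (A <= L2 + B)%VS.
Proof.
move=> Ay0 nB.
have sJA : (brs br fullv A + B <= A)%VS.
  by rewrite subv_add sBA andbT; apply: brs_subv => u v _ Av; apply: iA.
have iJ := idealD (ideal_brs ideal_fullv iA) iB.
have [JB|JA] := chief_minimal chiefAB iJ (addvSr _ _) sJA.
  by case/negP: nB; rewrite -JB (subvP (addvSl _ _)) ?memv_brs ?memvf.
by rewrite -{1}JA addvS ?brsS ?subvf.
Qed.

Lemma compl_dim M : complements br A B M ->
  (\dim M + \dim A = \dim (fullv : {vspace V}) + \dim B)%N.
Proof. by case=> _ AM capAM; rewrite addnC -dimv_sum_cap AM capAM. Qed.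

Section Complement.
Variables M K : {vspace V}.
Hypotheses (complM : complements br A B M) (coreMK : is_core br M K).

Let sM : subalg br M. Proof. by case: complM. Qed.
Let AM : (A + M)%VS = fullv. Proof. by case: complM. Qed.
Let capAM : (A :&: M)%VS = B. Proof. by case: complM. Qed.
Let iK : ideal br K. Proof. by case: coreMK. Qed.
Let sKM : (K <= M)%VS. Proof. by case: coreMK. Qed.

Lemma B_sub_compl : (B <= M)%VS.
Proof. by rewrite -capAM capvSr. Qed.

Lemma B_sub_core : (B <= K)%VS.
Proof. by case: coreMK => _ _; apply; [exact: iB | exact: B_sub_compl]. Qed.

Lemma capA_core : (A :&: K)%VS = B.
Proof.
apply/eqP; rewrite eqEsubv subv_cap sBA B_sub_core andbT.
by rewrite -capAM capvS.
Qed.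

Lemma compl_decomp x : exists2 a, a \in A & x - a \in M.
Proof.
have : x \in (A + M)%VS by rewrite AM memvf.
by case/memv_addP => a Aa [m Mm ->]; exists a => //; rewrite addrC addKr.
Qed.

Lemma core_centralizes k y : k \in K -> y \in A -> br k y \in B.
Proof.
by move=> Kk Ay; rewrite -capA_core; apply/memv_capP; split; [apply: iA | apply: ideal_brl].
Qed.

Lemma centv_compl_sub_core : (centv A B :&: M <= K)%VS.
Proof.
case: coreMK => _ _; apply; last exact: capvSr.
apply: (ideal_addv_stable AM) => [a|m] z Az /memv_capP [Cz Mz].
  rewrite memv_cap ideal_centv //= br_anti memvN (subvP B_sub_compl) //.
  by have /memv_centv := Cz; apply.
by rewrite memv_cap ideal_centv //= sM.
Qed.

Lemma core_compl_cent : complements_in_cent br A B K.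
Proof.
split=> [x|]; last exact: capA_core.
split=> [/memv_addP [a Aa [k Kk ->]] y Ay | Cx].
  by rewrite brDl; apply: memvD; [apply: chief_abelian | apply: core_centralizes].
have [a Aa Mxa] := compl_decomp x.
rewrite -[x](subrK a) addrC; apply: memv_add => //.
apply/(subvP centv_compl_sub_core)/memv_capP; split => //.
by apply/memv_centv => y Ay; rewrite brBl; apply: memvB; [apply: Cx | apply: chief_abelian].
Qed.

Lemma br_compl_core u v : u \in M -> v \in M -> br u v \in K.
Proof.
move=> Mu Mv; apply/(subvP centv_compl_sub_core)/memv_capP; split; last exact: sM.
by apply/memv_centv => y; apply/L2_centralizes_chief/memv_L2.
Qed.

Lemma br_compl_centralizes w u v : u \in M -> v \in A -> br (br w u) v \in B.
Proof.
move=> Mu Av; have [a Aa Mwa] := compl_decomp w.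
rewrite -[w](subrK a) brDl brDl; apply: memvD.
  by apply: core_centralizes => //; apply: br_compl_core.
by apply: chief_abelian => //; apply: ideal_brl.
Qed.

Lemma compl_eq_core_of_central : (forall z y, y \in A -> br z y \in B) -> M = K.
Proof.
move=> centralA; apply/eqP; rewrite eqEsubv sKM andbT.
apply/subvP => m Mm; apply/(subvP centv_compl_sub_core)/memv_capP; split => //.
by apply/memv_centv => y; apply: centralA.
Qed.

Section Acting.
Variables m0 y0 : V.
Hypotheses (Mm0 : m0 \in M) (Ay0 : y0 \in A) (nB : br m0 y0 \notin B).

(* Modulo B, ad m0 commutes with the action of L on A/B, so its image and
   kernel on A/B are ideals between B and A. *)
Lemma acting_onto a : a \in A -> exists2 x, x \in A & br m0 x - a \in B.
Proof.
have iJ : ideal br (brs br <[m0]> A + B).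
  move=> w z /memv_addP [s Ss [b Bb ->]]; rewrite brDr.
  apply: memvD; last by apply/(subvP (addvSr _ _))/iB.
  have : (brs br <[m0]> A <= adl w @^-1: (brs br <[m0]> A + B))%VS.
    apply: brs_subv => u v /vlineP [c ->] Av; rewrite -memv_preim adlE br_jacobi addrC.
    apply: memv_add; first by apply: memv_brs; [apply/memvZ/memv_line | apply: iA].
    by apply: br_compl_centralizes => //; apply: memvZ.
  by move/subvP/(_ s Ss); rewrite -memv_preim adlE.
have sJA : (brs br <[m0]> A + B <= A)%VS.
  by rewrite subv_add sBA andbT; apply: brs_subv => u v _ Av; apply: iA.
have [JB|JA] := chief_minimal chiefAB iJ (addvSr _ _) sJA.
  by case/negP: nB; rewrite -JB (subvP (addvSl _ _)) // memv_brs ?memv_line.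
rewrite -{1}JA => /memv_addP [s Ss [b Bb ->]].
have : (brs br <[m0]> A <= adl m0 @: A)%VS.
  apply: brs_subv => u v /vlineP [c ->] Av.
  by rewrite brZl -brZr -adlE; apply/memv_img/memvZ.
move/subvP/(_ s Ss)/memv_imgP => [x Ax ->]; exists x => //.
by rewrite adlE opprD addrA subrr add0r memvN.
Qed.

Lemma acting_inj x : x \in A -> br m0 x \in B -> x \in B.
Proof.
move=> Ax Bm0x; pose J := (A :&: (adl m0 @^-1: B))%VS.
have memJ z : (z \in J) = (z \in A) && (br m0 z \in B).
  by rewrite memv_cap -memv_preim adlE.
have iJ : ideal br J.
  move=> w z; rewrite !memJ => /andP [Az Bm0z]; apply/andP; split; first exact: iA.
  rewrite br_jacobi (br_anti m0 w) brNl; apply: memvD; last exact: iB.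
  by rewrite memvN; apply: br_compl_centralizes.
have sBJ : (B <= J)%VS.
  by apply/subvP => b Bb; rewrite memJ (subvP sBA) //=; apply: iB.
have [JB|JA] := chief_minimal chiefAB iJ sBJ (capvSl _ _).
  by rewrite -JB memJ Ax.
by case/negP: nB; have := Ay0; rewrite -JA memJ => /andP [].
Qed.

Lemma acting_normalizer y : br m0 y \in K -> y \in M.
Proof.
move=> Km0y; have [a Aa May] := compl_decomp y.
rewrite -[y](subrK a); apply: memvD => //; apply/(subvP B_sub_compl)/acting_inj => //.
rewrite -capA_core memv_cap iA //=.
have -> : br m0 a = br m0 y - br m0 (y - a) by rewrite brBr opprB addrC subrK.
by apply: memvB => //; apply: br_compl_core.
Qed.

End Acting.

Lemma compl_maximal : maximal_subalg br M.
Proof.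
split=> //.
  by apply/negP => /eqP EM; apply: (chief_nsub chiefAB); rewrite -capAM EM capvf.
move=> S sS sMS; have sBS := subv_trans B_sub_compl sMS.
have iSA : ideal br (S :&: A).
  apply: (ideal_addv_stable AM) => [a|m] z Aa /memv_capP [Sz Az];
    rewrite memv_cap iA //= andbT.
    by apply/(subvP sBS)/chief_abelian.
  by apply: sS => //; apply: (subvP sMS).
have sBSA : (B <= S :&: A)%VS by rewrite subv_cap sBS sBA.
have SE : (S :&: A + M)%VS = S by rewrite vspace_modr // AM capvf.
have [SAB|SAA] := chief_minimal chiefAB iSA sBSA (capvSr _ _).
  by left; rewrite -SE SAB; apply/addv_idPr/B_sub_compl.
by right; rewrite -SE SAA.
Qed.

Lemma core_min_ideal_over : min_ideal_over br K (A + K).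
Proof.
split; [exact: idealD | exact: addvSr | |].
  apply/negP => /eqP AKK; apply: (chief_nsub chiefAB).
  by rewrite -capA_core subv_cap subvv /= -AKK addvSl.
move=> J iJ sKJ sJAK; have sBJA : (B <= J :&: A)%VS.
  by rewrite subv_cap (subv_trans B_sub_core sKJ) sBA.
have JE : (J :&: A + K)%VS = J by rewrite vspace_modr //; apply/capv_idPl.
have [JAB|JAA] := chief_minimal chiefAB (idealI iJ iA) sBJA (capvSr _ _).
  by left; rewrite -JE JAB; apply/addv_idPr/B_sub_core.
by right; rewrite -JE JAA.
Qed.

(* A minimal ideal J/K other than (A + K)/K meets it trivially, so
   [J, A] <= J :&: A <= K :&: A = B: then J <= C_L(A/B) = A + K, a contradiction. *)
Lemma core_monolithic : monolithic_quo br K.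
Proof.
have minAK := core_min_ideal_over.
exists (A + K)%VS; split=> // J [iJ sKJ nJK minJ].
have sKJAK : (K <= J :&: (A + K))%VS by rewrite subv_cap sKJ addvSr.
have [JK|JAK] := minJ _ (idealI iJ (idealD iA iK)) sKJAK (capvSl _ _); last first.
  have sJAK : (J <= A + K)%VS by rewrite -JAK capvSr.
  case: minAK => _ _ _ /(_ J iJ sKJ sJAK) [JK|//].
  by move/eqP: nJK; rewrite JK.
exfalso; move/negP: nJK; apply.
have sJAK : (J <= A + K)%VS.
  apply/subvP => j Jj; apply/((proj1 core_compl_cent) j).2 => y Ay.
  rewrite -capA_core memv_cap iA //= -JK memv_cap ideal_brl //=.
  by apply/(subvP (addvSl A K))/iA.
by move/capv_idPl: sJAK; rewrite JK => <-.
Qed.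

Lemma core_primitive : primitive_quo br K.
Proof. by exists M; split => //; exact: compl_maximal. Qed.

End Complement.

End ChiefFactor.

End LieAlgebra.

Lemma sum_triangle (U : zmodType) (g : nat -> nat -> U) n :
  \sum_(i < n) \sum_(j < i.+1) g j (i - j)%N = \sum_(j < n) \sum_(l < n - j) g j l.
Proof.
elim: n => [|n IHn]; first by rewrite !big_ord0.
rewrite big_ord_recr /= IHn [RHS]big_ord_recr /= subSnn big_ord1.
have sumS (j : 'I_n) : \sum_(l < n.+1 - j) g j l = \sum_(l < n - j) g j l + g j (n - j)%N.
  by rewrite subSn ?(ltnW (ltn_ord j)) // big_ord_recr.
rewrite (eq_bigr _ (fun j _ => sumS j)) big_split /= -!addrA; congr (_ + _).
by rewrite big_ord_recr /= subnn.
Qed.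

Lemma sum_square_triangle (U : zmodType) (g : nat -> nat -> U) n :
  (forall j l, (n <= j + l)%N -> g j l = 0) ->
  \sum_(j < n) \sum_(l < n) g j l = \sum_(j < n) \sum_(l < n - j) g j l.
Proof.
move=> g0; apply: eq_bigr => j _.
rewrite -(big_mkord xpredT (g j)) -(big_mkord xpredT (g j)).
rewrite (@big_cat_nat _ _ _ (n - j)%N 0 n _ _ (leq0n _) (leq_subr j n)) /=.
rewrite [X in _ + X]big1_seq ?addr0 // => l /andP [_].
rewrite mem_index_iota => /andP [jl _]; apply: g0.
by rewrite -(leq_add2l j) subnKC ?(ltnW (ltn_ord j)) // in jl.
Qed.

Lemma fact_inv_bin (F : fieldType) (i j : nat) : (j <= i)%N -> (i`!)%:R != 0 :> F ->
  (i`!)%:R^-1 * ('C(i, j))%:R = (j`!)%:R^-1 * ((i - j)`!)%:R^-1 :> F.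
Proof.
move=> ji; rewrite -(bin_fact ji) !natrM => nz.
have [c0 nz2] : ('C(i, j))%:R != 0 :> F /\ (j`!)%:R * ((i - j)`!)%:R != 0 :> F.
  by split; apply: contraNneq nz => ->; rewrite ?mul0r ?mulr0.
by rewrite invfM mulrC mulrA mulrV ?mul1r ?invfM // unitfE.
Qed.

Section ExpAd.
Variables (F : fieldType) (V : vectType F) (br : V -> V -> V).
Hypothesis lie : is_lie br.
Variable a : V.
Local Notation D := (br a).

Lemma iter_br_linr i c u v : iter i D (c *: u + v) = c *: iter i D u + iter i D v.
Proof. by elim: i => [//|i IHi]; rewrite iterS IHi br_linr. Qed.

Lemma iter_br0 i : iter i D 0 = 0.
Proof. by rewrite -(linfunE_lin (iter_br_linr i)) linear0. Qed.

Lemma iter_br_leibniz m x y : iter m D (br x y) =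
  \sum_(i < m.+1) ('C(m, i))%:R *: br (iter i D x) (iter (m - i) D y).
Proof.
elim: m => [|m IHm]; first by rewrite big_ord_recl big_ord0 /= bin0 scale1r addr0.
rewrite iterS IHm -(adlE lie) linear_sum /=.
under eq_bigr => i _ do rewrite linearZ /= (adlE lie) (br_jacobi lie) scalerDr.
rewrite big_split /= [RHS]big_ord_recl.
under [in RHS]eq_bigr => i _ do rewrite lift0 binS natrD scalerDl subSS.
rewrite bin0 scale1r big_split /= addrC addrA; congr (_ + _).
rewrite big_ord_recl /= bin0 scale1r subn0; congr (_ + _).
rewrite [RHS]big_ord_recr /= bin_small // scale0r addr0.
apply: eq_bigr => i _; rewrite /bump leq0n add1n add0n; congr (_ *: br _ _).
by rewrite -iterS -subSn // ltn_ord.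
Qed.

Variable n : nat.
Hypotheses (adn0 : forall x, iter n D x = 0)
  (fact_nz : forall i, (i < n)%N -> (i`!)%:R != 0 :> F)
  (br_iter0 : forall j l x y, (n <= j + l)%N -> br (iter j D x) (iter l D y) = 0).

Lemma expad_linear c u v :
  expad br a n (c *: u + v) = c *: expad br a n u + expad br a n v.
Proof.
rewrite /expad scaler_sumr -big_split; apply: eq_bigr => i _.
by rewrite iter_br_linr scalerDr !scalerA mulrC.
Qed.

(* Leibniz's rule; the terms lost to the truncation at n vanish by br_iter0. *)
Lemma expad_br x y : expad br a n (br x y) = br (expad br a n x) (expad br a n y).
Proof.
pose g j l := ((j`!)%:R^-1 * (l`!)%:R^-1) *: br (iter j D x) (iter l D y).
have -> : expad br a n (br x y) = \sum_(i < n) \sum_(j < i.+1) g j (i - j)%N.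
  rewrite /expad; apply: eq_bigr => i _; rewrite iter_br_leibniz scaler_sumr.
  apply: eq_bigr => j _; rewrite scalerA fact_inv_bin ?fact_nz //.
  by rewrite -ltnS ltn_ord.
have -> : br (expad br a n x) (expad br a n y) = \sum_(j < n) \sum_(l < n) g j l.
  rewrite /expad -(adrE lie) linear_sum; apply: eq_bigr => j _ /=.
  rewrite (adrE lie) -(adlE lie) linear_sum; apply: eq_bigr => l _ /=.
  by rewrite /g (adlE lie) (brZl lie) (brZr lie) scalerA.
by rewrite sum_triangle sum_square_triangle // => j l jln; rewrite /g br_iter0 ?scaler0.
Qed.

Lemma iter_expad j x :
  iter j D (expad br a n x) = \sum_(i < n) (i`!)%:R^-1 *: iter (i + j) D x.
Proof.
have itE u : linfun (iter j D) u = iter j D u := linfunE_lin (iter_br_linr j) u.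
rewrite /expad -itE linear_sum; apply: eq_bigr => i _.
by rewrite linearZ /= itE addnC iterD.
Qed.

(* If exp(ad a) x = 0, then by downward induction (ad a)^j x = 0 for all j:
   apply (ad a)^j to the series, where only the constant term survives. *)
Lemma expad_eq0 x : expad br a n x = 0 -> x = 0.
Proof.
move=> expx0.
suff iter0 k j : (n - k <= j)%N -> iter j D x = 0 by apply: (iter0 n 0%N); rewrite subnn.
elim: k j => [|k IHk] j jge.
  by rewrite subn0 in jge; rewrite -(subnK jge) iterD adn0 iter_br0.
have [/IHk//|jlt] := leqP (n - k) j.
have n0 : (0 < n)%N by lia.
have := iter_expad j x; rewrite expx0 iter_br0 (bigD1 (Ordinal n0)) //= big1 ?addr0.
  by rewrite add0n invr1 scale1r => ->.
move=> i ni0; rewrite IHk ?scaler0 //.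
have : (0 < i)%N by rewrite lt0n; apply: contraNneq ni0 => i0; apply/eqP/val_inj.
lia.
Qed.

Lemma expad_bijective : bijective (expad br a n).
Proof.
pose e : 'End(V) := linfun (expad br a n).
have eE u : e u = expad br a n u := linfunE_lin expad_linear u.
have ker0 : lker e == 0%VS.
  apply/lker0P => u v; rewrite !eE => euv; apply/eqP; rewrite -subr_eq0; apply/eqP.
  by apply: expad_eq0; rewrite -eE linearB /= !eE euv subrr.
have img : limg e = fullv.
  by apply/eqP; rewrite eqEdim subvf /= limg_dim_eq // capfv; apply/eqP.
exists (e^-1)%VF => x; rewrite -eE; first exact: (lker0_lfunK ker0).
by apply: limg_lfunVK; rewrite img memvf.
Qed.

Lemma expad_lie_aut : is_lie_aut br (expad br a n).
Proof. by split; [exact: expad_linear | exact: expad_bijective | exact: expad_br]. Qed.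

End ExpAd.

Definition stabilizes_ideals (F : fieldType) (V : vectType F) (br : V -> V -> V)
    (f : V -> V) : Prop :=
  forall I x, ideal br I -> x \in I -> f x \in I.

Lemma expad_stabilizes_ideals (F : fieldType) (V : vectType F) (br : V -> V -> V) a n :
  stabilizes_ideals br (expad br a n).
Proof.
move=> I x iI Ix; apply: memv_suml => i _; apply: memvZ.
by elim: (nat_of_ord i) => //= k IHk; apply: iI.
Qed.

Section LieAutomorphism.
Variables (F : fieldType) (V : vectType F) (br : V -> V -> V) (f : V -> V).
Hypotheses (autf : is_lie_aut br f) (stf : stabilizes_ideals br f).
Implicit Types (A B I K M U : {vspace V}).

Let f_lin : forall c u v, f (c *: u + v) = c *: f u + f v.
Proof. by case: autf. Qed.
Let f_inj : injective f. Proof. by case: autf => _ /bij_inj. Qed.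
Let f_surj y : exists x, y = f x.
Proof. by case: autf => _ [g _ gK] _; exists (g y); rewrite gK. Qed.

Lemma vimage_lfun U : vimage f U = (linfun f @: U)%VS.
Proof.
transitivity (linfun f @: <<vbasis U>>)%VS; last by rewrite vbasis_span.
by rewrite limg_span; congr <<_>>%VS; apply: eq_map => x; rewrite linfunE_lin.
Qed.

Lemma memv_vimage U x : x \in U -> f x \in vimage f U.
Proof. by move=> Ux; rewrite vimage_lfun -(linfunE_lin f_lin); apply: memv_img. Qed.

Lemma memv_vimageP U y : y \in vimage f U -> exists2 x, x \in U & y = f x.
Proof. by rewrite vimage_lfun => /memv_imgP [x Ux ->]; exists x; rewrite ?linfunE_lin. Qed.

Lemma dim_vimage U : \dim (vimage f U) = \dim U.
Proof.
rewrite vimage_lfun; apply: limg_dim_eq.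
have /eqP -> : lker (linfun f) == 0%VS.
  by apply/lker0P => u v; rewrite !(linfunE_lin f_lin); apply: f_inj.
by rewrite capv0.
Qed.

Lemma ideal_vimage I : ideal br I -> vimage f I = I.
Proof.
move=> iI; apply/eqP; rewrite eqEdim dim_vimage leqnn andbT.
by apply/subvP => y /memv_vimageP [x Ix ->]; apply: stf.
Qed.

Lemma ideal_preim I x : ideal br I -> f x \in I -> x \in I.
Proof.
by move=> iI; rewrite -{1}(ideal_vimage iI) => /memv_vimageP [y Iy /f_inj ->].
Qed.

Lemma vimage_compl A B M : chief_factor br A B ->
  complements br A B M -> complements br A B (vimage f M).
Proof.
case=> iA iB sBA _ _ [sM AM capAM]; split.
- move=> u v /memv_vimageP [x Mx ->] /memv_vimageP [y My ->].
  by case: autf => _ _ <-; apply/memv_vimage/sM.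
- rewrite -(ideal_vimage iA) !vimage_lfun -limgD -vimage_lfun AM.
  exact/ideal_vimage/ideal_fullv.
- apply/eqP; rewrite eqEsubv; apply/andP; split; apply/subvP => z.
    case/memv_capP => Az /memv_vimageP [m Mm Ez].
    have Am : m \in A by apply: (ideal_preim iA); rewrite -Ez.
    by rewrite Ez; apply: stf => //; rewrite -capAM memv_cap Am.
  move=> Bz; rewrite memv_cap (subvP sBA) //=.
  have [u Eu] := f_surj z; have Bu : u \in B by apply: (ideal_preim iB); rewrite -Eu.
  by rewrite Eu; apply: memv_vimage; move: Bu; rewrite -capAM => /memv_capP [].
Qed.

Lemma vimage_core M K : is_core br M K -> is_core br (vimage f M) K.
Proof.
case=> iK sKM maxK; split=> // [|I iI sIfM].
  by rewrite -(ideal_vimage iK) !vimage_lfun limgS.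
apply: maxK => //; apply/subvP => i Ii.
have /memv_vimageP [m Mm /f_inj ->] : f i \in vimage f M by apply/(subvP sIfM)/stf.
exact: Mm.
Qed.

End LieAutomorphism.

Lemma prime_ndvd_fact p i : prime p -> (i < p)%N -> ~~ (p %| i`!)%N.
Proof.
move=> pp; elim: i => [|i IHi] ltip.
  by rewrite fact0 dvdn1; apply: contraTneq (prime_gt1 pp) => ->.
rewrite factS Euclid_dvdM // negb_or IHi ?(ltnW ltip) // andbT.
by apply/negP => /dvdn_leq; lia.
Qed.

Section Conjugacy.
Variables (F : fieldType) (V : vectType F) (br : V -> V -> V) (p : nat).
Variables A B : {vspace V}.
Hypotheses (lie : is_lie br) (charFp : has_char F p)
  (nilL2 : nilp_class_lt br (brs br fullv fullv) p) (chiefAB : chief_factor br A B).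
Implicit Types (I K M N S : {vspace V}).
Local Notation L2 := (brs br fullv fullv).

Let L2nil := nilp_class_lt_nilpotent nilL2.
Let iA : ideal br A. Proof. by case: chiefAB. Qed.
Let iB : ideal br B. Proof. by case: chiefAB. Qed.
Let sBA : (B <= A)%VS. Proof. by case: chiefAB. Qed.

Lemma iter_br_L2 l x j : l \in L2 -> iter j.+1 (br l) x \in lcs br L2 j.
Proof.
move=> L2l; elim: j => [|j IHj]; first exact: memv_L2.
by rewrite iterS (br_anti lie) memvN /=; apply: memv_brs.
Qed.

(* Take n = p, which bounds the nilpotency class of L^2 and keeps 0!, ..., (p-1)!
   invertible; in characteristic 0 any n past the nilpotency class will do. *)
Lemma expad_L2_aut l : l \in L2 ->
  exists n, [/\ (2 <= n)%N, expad_defined br l n & is_lie_aut br (expad br l n)].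
Proof.
move=> L2l.
have [n [n2 lcs0 fact_nz]] : exists n, [/\ (2 <= n)%N, lcs br L2 n.-1 = 0%VS &
    forall i, (i < n)%N -> (i`!)%:R != 0 :> F].
  move: charFp nilL2 L2nil; rewrite /has_char /nilp_class_lt.
  case: eqP => [_ char0 _ [k lcsk0]|_ charp lcs0 _].
    exists k.+2; split=> // [|i _].
      by apply/eqP; rewrite -subv0 -lcsk0 lcs_antimono.
    by move/pcharf0P: char0 => ->; rewrite -lt0n fact_gt0.
  exists p; split=> // [|i ltip]; first exact/prime_gt1/(pcharf_prime charp).
  by rewrite -(dvdn_pcharf charp) prime_ndvd_fact // (pcharf_prime charp).
have iter0 k x : (n <= k)%N -> iter k (br l) x = 0.
  move=> nk; rewrite -(subnKC nk) iterD.
  have := iter_br_L2 (iter (k - n) (br l) x) n.-1 L2l.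
  by rewrite prednK ?(ltnW n2) // lcs0 memv0 => /eqP.
exists n; split=> //; first by split=> // x; apply: iter0.
apply: expad_lie_aut => // [x|]; first exact: iter0.
move=> [|j] l' x y jl'; first by rewrite (iter0 l') ?(br0r lie).
case: l' jl' => [|l'] jl'; first by rewrite (iter0 j.+1) ?(br0l lie) //; lia.
have := lcs_br lie (iter_br_L2 x j L2l) (iter_br_L2 y l' L2l).
move/(subvP (lcs_antimono lie (_ : n.-1 <= (j + l').+1)%N)); rewrite lcs0 memv0.
by move=> /(_ ltac:(lia)) /eqP.
Qed.

Lemma conj_cls_refl M : conj_cls br M M.
Proof.
have expad01 x : expad br 0 1 x = x by rewrite /expad big_ord1 /= fact0 invr1 scale1r.
exists 0, 1%N; split.
- split=> [x|[]// _]; first by rewrite /= (br0l lie).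
  by rewrite fact0 oner_neq0.
- split=> [c u v||x y]; rewrite ?expad01 //.
  by exists id => x; rewrite expad01.
- by rewrite /vimage (eq_map expad01) map_id vbasis_span.
Qed.

Lemma expad_A_mod_B l n m : l \in A -> (2 <= n)%N -> expad br l n m - (m + br l m) \in B.
Proof.
move=> Al; case: n => [|[|n']] // _.
rewrite /expad big_ord_recl big_ord_recl /= fact0 invr1 !scale1r.
rewrite addrA [_ + \sum_(i < n') _]addrC addrK.
apply: memv_suml => i _; apply: memvZ.
by apply: (chief_abelian lie chiefAB L2nil) => //; apply: (ideal_brl lie).
Qed.

(* [mu, f M1] <= [f m0, f M1] + B = f [m0, M1] + B <= K, and mu moves A/B. *)
Lemma vimage_compl_eq f M1 M2 K m0 mu y0 :
  is_lie_aut br f -> stabilizes_ideals br f ->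
  complements br A B M1 -> complements br A B M2 -> is_core br M1 K -> is_core br M2 K ->
  m0 \in M1 -> mu \in M2 -> y0 \in A -> br mu y0 \notin B -> f m0 - mu \in B ->
  vimage f M1 = M2.
Proof.
move=> autf stf cM1 cM2 kM1 kM2 M1m0 M2mu Ay0 nB Bfm0.
have [_ _ fbr] := autf; have iK : ideal br K by case: kM1.
have sfM12 : (vimage f M1 <= M2)%VS.
  apply/subvP => z /(memv_vimageP autf) [y M1y ->].
  apply: (acting_normalizer lie chiefAB L2nil cM2 kM2 M2mu Ay0 nB).
  have -> : br mu (f y) = br (f m0) (f y) - br (f m0 - mu) (f y).
    by rewrite (brBl lie) opprB addrCA subrr addr0.
  apply: memvB; first by rewrite -fbr; apply/stf/(br_compl_core lie chiefAB L2nil cM1 kM1).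
  by apply/(subvP (B_sub_core chiefAB cM2 kM2))/(ideal_brl lie).
apply/eqP; rewrite eqEdim sfM12 (dim_vimage autf) /=.
have := compl_dim cM1; rewrite -(compl_dim cM2) => /addIn ->.
by rewrite leqnn.
Qed.

(* When A/B is central, complements are ideals and equal their cores.
   Otherwise pick m0 in M1 moving A/B, write m0 = al + mu with mu in M2, and
   solve [m0, x] = al mod B with x = l + b in A, l in L^2: then exp(ad l)
   sends m0 to m0 - [m0, l] = mu mod B. *)
Lemma compl_same_core_conj M1 M2 K : complements br A B M1 -> complements br A B M2 ->
  is_core br M1 K -> is_core br M2 K -> conj_cls br M1 M2.
Proof.
move=> cM1 cM2 kM1 kM2; have AM1 : (A + M1)%VS = fullv by case: cM1.
have [centralA|[m0 [y0 [M1m0 Ay0 nB]]]] := chief_central_or_acting lie chiefAB L2nil AM1.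
  rewrite (compl_eq_core_of_central lie chiefAB cM1 kM1 centralA).
  by rewrite -(compl_eq_core_of_central lie chiefAB cM2 kM2 centralA); apply: conj_cls_refl.
have [al Aal M2mu] := compl_decomp cM2 m0; set mu := m0 - al in M2mu.
have nBmu : br mu y0 \notin B.
  apply: contra nB => Bmu; have -> : m0 = mu + al by rewrite /mu subrK.
  by rewrite (brDl lie); apply: memvD => //; apply: (chief_abelian lie chiefAB L2nil).
have [x Ax Bm0x] := acting_onto lie chiefAB L2nil cM1 kM1 M1m0 Ay0 nB Aal.
have /memv_addP [l L2l [b Bb Exl]] := subvP (acting_chief_sub_L2 lie chiefAB Ay0 nB) _ Ax.
have El : l = x - b by rewrite Exl addrK.
have Al : l \in A by rewrite El; apply/memvB/(subvP sBA).
have [n [n2 defn autn]] := expad_L2_aut L2l.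
exists l, n; split=> //; apply/esym.
apply: (vimage_compl_eq autn (@expad_stabilizes_ideals _ _ br l n) cM1 cM2 kM1 kM2 M1m0 M2mu
  Ay0 nBmu).
have -> : expad br l n m0 - mu = (expad br l n m0 - (m0 + br l m0)) - (br m0 l - al).
  by rewrite /mu (br_anti lie l m0) -addrA -opprD -addrA addKr.
apply: memvB; first exact: expad_A_mod_B.
by rewrite El (brBr lie) addrAC; apply: memvB => //; apply: iB.
Qed.

Lemma conj_cls_compl_core M K : complements br A B M -> is_core br M K ->
  forall S, conj_cls br M S <-> complements br A B S /\ is_core br S K.
Proof.
move=> cM kM S; split=> [[a [n [_ autf ->]]]|[cS kS]]; last exact: compl_same_core_conj kS.
have stf := @expad_stabilizes_ideals _ _ br a n.
by split; [apply: vimage_compl | apply: vimage_core].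
Qed.

Lemma conj_clsE M K : complements br A B M -> is_core br M K ->
  conj_cls br M = (fun S => complements br A B S /\ is_core br S K).
Proof.
move=> cM kM; apply: functional_extensionality => S.
exact/propositional_extensionality/conj_cls_compl_core.
Qed.

Section PreimageComplement.
Variables (N M0 K0 : {vspace V}) (m0 y0 : V).
Hypotheses (iN : ideal br N) (centN : complements_in_cent br A B N)
  (cM0 : complements br A B M0) (kM0 : is_core br M0 K0)
  (M0m0 : m0 \in M0) (Ay0 : y0 \in A) (nB : br m0 y0 \notin B).

Let M := (adl br m0 @^-1: N)%VS.
Let memM y : (y \in M) = (br m0 y \in N).
Proof. by rewrite -memv_preim (adlE lie). Qed.
Let capAN : (A :&: N)%VS = B. Proof. by case: centN. Qed.
Let sBN : (B <= N)%VS. Proof. by rewrite -capAN capvSr. Qed.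
Let sNM : (N <= M)%VS. Proof. by apply/subvP => nu Nnu; rewrite memM; apply: iN. Qed.

(* [m0, L] <= L^2 <= C_L(A/B) = A + N, and ad m0 is onto A/B. *)
Lemma preim_ad_compl : complements br A B M.
Proof.
split.
- move=> y z; rewrite !memM => Ny Nz; rewrite (br_jacobi lie).
  by apply: memvD; [apply: (ideal_brl lie) | apply: iN].
- apply/eqP; rewrite eqEsubv subvf /=; apply/subvP => y _.
  have : br m0 y \in (A + N)%VS.
    apply/(proj1 centN _).2 => y'.
    exact/(L2_centralizes_chief lie chiefAB L2nil)/memv_L2.
  case/memv_addP => al Aal [nu Nnu Em0y].
  have [x Ax Bm0x] := acting_onto lie chiefAB L2nil cM0 kM0 M0m0 Ay0 nB Aal.
  rewrite -[y](subrK x) addrC; apply: memv_add => //.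
  rewrite memM (brBr lie) Em0y.
  have -> : al + nu - br m0 x = nu - (br m0 x - al) by rewrite opprB addrCA addrA.
  by apply: memvB => //; apply: (subvP sBN).
- apply/eqP; rewrite eqEsubv; apply/andP; split; apply/subvP => z.
    case/memv_capP => Az; rewrite memM => Nm0z.
    apply: (acting_inj lie chiefAB L2nil cM0 kM0 M0m0 Ay0 nB Az).
    by rewrite -capAN memv_cap Nm0z iA.
  by move=> Bz; rewrite memv_cap (subvP sBA) //= memM (subvP sBN) ?iB.
Qed.

(* The core K of M contains N, and K <= C_L(A/B) = A + N with K :&: A = B <= N. *)
Lemma preim_ad_core : is_core br M N.
Proof.
have [K kMK] := core_exists lie M; have [iK sKM maxK] := kMK.
have sNK := maxK _ iN sNM.
split=> // I iI sIM; apply: subv_trans (maxK I iI sIM) _; apply/subvP => k Kk.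
have : k \in (A + N)%VS.
  apply/(proj1 centN k).2/(proj1 (core_compl_cent lie chiefAB L2nil preim_ad_compl kMK) k).1.
  exact: (subvP (addvSr A K)).
case/memv_addP => al Aal [nu Nnu Ek]; rewrite Ek; apply: memvD => //.
apply: (subvP sBN); rewrite -(capA_core chiefAB preim_ad_compl kMK) memv_cap Aal /=.
by rewrite -(addrK nu al) -Ek; apply: memvB => //; apply: (subvP sNK).
Qed.

End PreimageComplement.

Lemma cent_compl_is_core N : (exists M, complements br A B M) -> ideal br N ->
  complements_in_cent br A B N -> exists M, complements br A B M /\ is_core br M N.
Proof.
move=> [M0 cM0] iN centN; have [K0 kM0] := core_exists lie M0.
have AM0 : (A + M0)%VS = fullv by case: cM0.
have [centralA|[m0 [y0 [M0m0 Ay0 nB]]]] := chief_central_or_acting lie chiefAB L2nil AM0.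
  have [centNP capAN] := centN; exists N; split; last by split=> // I _.
  split=> //; first exact: ideal_subalg.
  apply/eqP; rewrite eqEsubv subvf /=; apply/subvP => x _.
  by apply/(centNP x).2 => y; apply: centralA.
exists (adl br m0 @^-1: N)%VS.
by split; [apply: (@preim_ad_compl N M0 K0 m0 y0) | apply: (@preim_ad_core N M0 K0 m0 y0)].
Qed.

Lemma maximal_supplement_compl M :
  maximal_subalg br M -> supplements br A B M -> complements br A B M.
Proof.
case=> sM nMT _ [_ AM sBAM]; split=> //.
have iAM : ideal br (A :&: M).
  apply: (ideal_addv_stable lie AM) => [a|m] z Aa /memv_capP [Az Mz];
    rewrite memv_cap iA //=.
    by apply/(subvP (subv_trans sBAM (capvSr _ _)))/(chief_abelian lie chiefAB L2nil).
  exact: sM.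
have [//|AMA] := chief_minimal chiefAB iAM sBAM (capvSl _ _).
by case/negP: nMT; rewrite -AM; apply/eqP/esym/addv_idPr; rewrite -AMA capvSr.
Qed.

Lemma precrown_class_bij :
  exists f : {vspace V} * {vspace V} -> ({vspace V} -> Prop),
    [/\ forall P, is_precrown br A B P -> is_compl_class br A B (f P),
        forall P Q, is_precrown br A B P -> is_precrown br A B Q -> f P = f Q -> P = Q &
        forall X, is_compl_class br A B X -> exists P, is_precrown br A B P /\ f P = X].
Proof.
exists (fun P S => complements br A B S /\ is_core br S P.2); split.
- move=> _ [M [K [maxM suppM kM _ ->]]].
  have cM := maximal_supplement_compl maxM suppM.
  by exists M; split=> //; rewrite (conj_clsE cM kM).
- move=> _ _ [M [K [maxM suppM kM _ ->]]] [M' [K' [_ _ kM' _ ->]]] /= fPQ.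
  have cM := maximal_supplement_compl maxM suppM.
  have [_ kMK'] : complements br A B M /\ is_core br M K'.
    by have /= <- := congr1 (fun g => g M) fPQ.
  by rewrite (core_unique kM kMK').
- move=> X [M [cM ->]]; have [K kM] := core_exists lie M.
  exists ((A + K)%VS, K); split; last by rewrite (conj_clsE cM kM).
  exists M, K; split=> //.
  + exact: (compl_maximal lie chiefAB L2nil cM).
  + by case: cM => sM AM capAM; split=> //; rewrite capAM.
  + by split; [apply: (core_monolithic lie chiefAB L2nil cM kM) |
               apply: (core_primitive lie chiefAB L2nil cM kM)].
Qed.

End Conjugacy.

Theorem proposition2p7 (F : fieldType) (V : vectType F) (br : V -> V -> V)
    (p : nat) (A B : {vspace V}) :
  is_lie br -> has_char F p -> solvable_lie br ->
  nilp_class_lt br (brs br fullv fullv) p ->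
  chief_factor br A B -> (exists M, complements br A B M) ->
  [/\ (* every subalgebra has a core; conjugates of complements are complements *)
      (forall M, exists K, is_core br M K),
      (forall M S, complements br A B M -> conj_cls br M S -> complements br A B S) /\
      (* all members of a conjugacy class have a common core *)
      (forall M S K, complements br A B M -> conj_cls br M S ->
         is_core br M K -> is_core br S K) /\
      (* the core of a complement complements A/B in C_L(A/B) *)
      (forall M K, complements br A B M -> is_core br M K ->
         ideal br K /\ complements_in_cent br A B K),
      (* injectivity on classes *)
      (forall M1 M2 K, complements br A B M1 -> complements br A B M2 ->
         is_core br M1 K -> is_core br M2 K -> conj_cls br M1 = conj_cls br M2),
      (* surjectivity *)
      (forall N, ideal br N -> complements_in_cent br A B N ->
         exists M, complements br A B M /\ is_core br M N) &
      (* bijection between precrowns associated with A/B and classes *)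
      exists f : {vspace V} * {vspace V} -> ({vspace V} -> Prop),
        [/\ forall P, is_precrown br A B P -> is_compl_class br A B (f P),
            forall P Q, is_precrown br A B P -> is_precrown br A B Q ->
              f P = f Q -> P = Q &
            forall X, is_compl_class br A B X ->
              exists P, is_precrown br A B P /\ f P = X]].
Proof.
move=> lie charFp _ nilL2 chiefAB complAB.
have classE := conj_clsE lie charFp nilL2 chiefAB.
have class_core M S : complements br A B M -> conj_cls br M S ->
    forall K, is_core br M K -> complements br A B S /\ is_core br S K.
  by move=> cM clMS K kM; rewrite (classE _ _ cM kM) in clMS.
split.
- exact: core_exists.
- split; [|split].
  + by move=> M S cM /class_core clMS; have [K /(clMS cM) []] := core_exists lie M.
  + by move=> M S K cM /class_core clMS /(clMS cM) [].
  + move=> M K cM kM; split; first by case: kM.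
    exact: (core_compl_cent lie chiefAB (nilp_class_lt_nilpotent nilL2) cM kM).
- by move=> M1 M2 K cM1 cM2 kM1 kM2; rewrite (classE _ _ cM1 kM1) (classE _ _ cM2 kM2).
- by move=> N; exact: (cent_compl_is_core lie nilL2 chiefAB complAB).
- exact: (precrown_class_bij lie charFp nilL2 chiefAB).
Qed.
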